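(* Let $f$ be a positive function on $\mathbb R$ such that there exist $M>0$ and $q_1\in(0,1]$ with $f(x)\le M\psi(q_1x)$ for all $x\in\mathbb R$. Then for all $q_2\in(0,1)$ and all $\sigma\in(0,1-q_2^2)$, $$K_\sigma f(x)\le\frac{2}{\sqrt3}M\psi(q_1q_2x)\quad\text{for all }x\in\mathbb R.$$
   Context: $\psi(x)=\pi^{-1/2}e^{-x^2}$, $\psi_\sigma(x)=\sigma^{-1}\psi(x/\sigma)$, $K_\sigma f=f*\psi_\sigma$. *)

From HB Require Import structures.
From mathcomp Require Import all_boot all_order all_algebra.
From mathcomp Require Import all_classical all_reals all_analysis.
Set Implicit Arguments. Unset Strict Implicit. Unset Printing Implicit Defensive.
Import Order.TTheory GRing.Theory Num.Theory.
Local Open Scope ring_scope.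
Local Open Scope classical_set_scope.

Definition psi {R : realType} (x : R) : R := (Num.sqrt pi)^-1 * expR (- (x ^+ 2)).

Definition psi_s {R : realType} (sigma x : R) : R := sigma^-1 * psi (x / sigma).

Definition Kconv {R : realType} (sigma : R) (f : R -> R) (x : R) : \bar R :=
  (\int[@lebesgue_measure R]_(y in [set: R]) (f y * psi_s sigma (x - y))%:E)%E.

(** The convolution of a Gaussian with a Gaussian is again a Gaussian: completing
    the square in [y] gives
    [psi (q y) psi_sigma (x - y) = c(x) exp (-(sqrt D / sigma)^2 (y - x / D)^2)]
    with [D = 1 + q^2 sigma^2], and integrating in [y] yields
    [K_sigma (psi (q .)) x = psi (q x / sqrt D) / sqrt D].  Since [D >= 1] the
    factor [1 / sqrt D] is at most [1 <= 2 / sqrt 3], and [sigma < 1 - q2^2]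
    forces [q2^2 D <= 1], i.e. [q / sqrt D >= q q2] for [q <= 1], so the
    Gaussian [psi (q x / sqrt D)] is dominated by [psi (q q2 x)]. *)
Set Warnings "-notation-overridden,-ambiguous-paths,-notation-incompatible-prefix".
From HB Require Import structures.
From mathcomp Require Import all_boot all_order all_algebra.
From mathcomp Require Import all_classical all_reals all_analysis.
From mathcomp Require Import measurable_realfun normal_distribution.
From mathcomp Require Import ring lra.
Import Order.TTheory GRing.Theory Num.Theory.
Import numFieldNormedType.Exports.
Set Implicit Arguments.
Unset Strict Implicit.
Local Open Scope ring_scope.
Local Open Scope classical_set_scope.

Section gaussian_convolution.
Context {R : realType}.
Notation mu := (@lebesgue_measure R).

Lemma sqrt_pi_gt0 : 0 < Num.sqrt pi :> R.
Proof. by rewrite sqrtr_gt0 pi_gt0. Qed.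

Lemma sqrt_pi_sqr : Num.sqrt pi ^+ 2 = pi :> R.
Proof. by rewrite sqr_sqrtr // pi_ge0. Qed.

Lemma psi_gt0 (y : R) : 0 < psi y.
Proof. by rewrite /psi mulr_gt0 ?invr_gt0 ?sqrt_pi_gt0 ?expR_gt0. Qed.

Lemma psi_ge0 (y : R) : 0 <= psi y.
Proof. exact/ltW/psi_gt0. Qed.

Lemma psi_s_ge0 (sigma y : R) : 0 < sigma -> 0 <= psi_s sigma y.
Proof. by move=> s0; rewrite /psi_s mulr_ge0 ?psi_ge0 // invr_ge0 ltW. Qed.

Lemma psi_le_norm (u v : R) : `|u| <= `|v| -> psi v <= psi u.
Proof.
move=> uv; rewrite /psi ler_wpM2l ?invr_ge0 ?sqrtr_ge0 // ler_expR lerN2.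
by rewrite -[u ^+ 2]real_normK ?num_real // -[v ^+ 2]real_normK ?num_real // lerXn2r.
Qed.

Lemma measurable_gauss (a c : R) :
  measurable_fun [set: R] (fun y => expR (- (a * (y - c)) ^+ 2)).
Proof.
apply: measurableT_comp => //; apply: measurableT_comp => //.
apply: measurable_funX => //=; apply: measurable_funM => //; exact: measurable_funB.
Qed.

Lemma measurable_psi_s_sub (sigma x : R) :
  measurable_fun [set: R] (fun y => psi_s sigma (x - y)).
Proof.
apply: measurable_funM => //; apply: measurable_funM => //.
apply: measurableT_comp => //; apply: measurableT_comp => //.
apply: measurable_funX; apply: measurable_funM => //; exact: measurable_funB.
Qed.

(* Read off from the normalisation of the normal density of variance [1 / (2 a^2)]. *)
Lemma integral_gauss (a c : R) : 0 < a ->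
  (\int[mu]_y (expR (- (a * (y - c)) ^+ 2))%:E = (Num.sqrt pi / a)%:E)%E.
Proof.
move=> a0; set s := (a * Num.sqrt 2)^-1.
have s0 : s != 0 by rewrite invr_eq0 mulf_neq0 ?gt_eqF ?sqrtr_gt0.
have ss : s ^+ 2 *+ 2 = a^-2.
  rewrite /s exprVn exprMn sqr_sqrtr // -mulr_natr.
  by rewrite invfM -mulrA [X in _ * X]mulrC divff ?mulr1.
have peak : normal_peak s = a / Num.sqrt pi.
  rewrite /normal_peak -mulrnAl ss.
  have -> : a^-2 * pi = (Num.sqrt pi / a) ^+ 2.
    by rewrite exprMn sqr_sqrtr ?pi_ge0 // exprVn mulrC.
  by rewrite sqrtr_sqr ger0_norm ?divr_ge0 ?sqrtr_ge0 ?ltW // invf_div.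
have := integral_normal_pdf c s.
rewrite normal_pdfE //.
under eq_integral do rewrite EFinM.
rewrite ge0_integralZl //; last 3 first.
- by apply/measurable_EFinP; exact: measurable_normal_fun.
- by move=> y _; rewrite lee_fin normal_fun_ge0.
- by rewrite lee_fin normal_peak_ge0.
have -> : (\int[mu]_y (normal_fun c s y)%:E =
           \int[mu]_y (expR (- (a * (y - c)) ^+ 2))%:E)%E.
  apply: eq_integral => y _; congr (_%:E); rewrite /normal_fun ss.
  by rewrite exprMn mulNr mulrC invrK.
rewrite peak.
have : (0 <= \int[mu]_y (expR (- (a * (y - c)) ^+ 2))%:E)%E.
  by apply: integral_ge0 => y _; rewrite lee_fin expR_ge0.
case: (\int[mu]_y _)%E => [r| |] //= _.
- move=> /eqP; rewrite -EFinM eqe => /eqP h; congr (_%:E).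
  have sp := sqrt_pi_gt0.
  apply: (mulfI (x := a / Num.sqrt pi)); first by rewrite mulf_neq0 ?invr_eq0 ?gt_eqF.
  by rewrite h; field; rewrite !gt_eqF.
- by rewrite gt0_muley ?lte_fin ?divr_gt0 ?sqrt_pi_gt0.
Qed.

Lemma psi_mul_psi_s (q sigma x y : R) : 0 < sigma ->
  let D := 1 + q ^+ 2 * sigma ^+ 2 in
  psi (q * y) * psi_s sigma (x - y) =
  (pi * sigma)^-1 * expR (- (q ^+ 2 / D * x ^+ 2))
    * expR (- (Num.sqrt D / sigma * (y - x / D)) ^+ 2).
Proof.
move=> s0 D.
have D0 : 0 < D by rewrite ltr_pwDl // mulr_ge0 // sqr_ge0.
have square : - (q * y) ^+ 2 + - ((x - y) / sigma) ^+ 2 =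
    - (q ^+ 2 / D * x ^+ 2) + - (Num.sqrt D / sigma * (y - x / D)) ^+ 2.
  rewrite !exprMn sqr_sqrtr ?ltW // /D; field.
  by rewrite exprMn -/D !gt_eqF.
rewrite /psi_s /psi -mulrA -expRD -square expRD.
move: (Num.sqrt pi) sqrt_pi_sqr sqrt_pi_gt0 => r <- r0; field.
by rewrite !gt_eqF.
Qed.

Lemma Kconv_le_psi (f : R -> R) (M q sigma : R) :
  measurable_fun [set: R] f -> (forall y, 0 <= f y) ->
  (forall y, f y <= M * psi (q * y)) -> 0 < sigma ->
  let D := 1 + q ^+ 2 * sigma ^+ 2 in
  forall x, (Kconv sigma f x <= (M / Num.sqrt D * psi (q / Num.sqrt D * x))%:E)%E.
Proof.
move=> mf f0 fle s0 D x.
have D0 : 0 < D by rewrite ltr_pwDl // mulr_ge0 // sqr_ge0.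
have rD0 : 0 < Num.sqrt D by rewrite sqrtr_gt0.
have M0 : 0 <= M by rewrite -(pmulr_lge0 _ (psi_gt0 (q * 0))) (le_trans (f0 0)).
set a := Num.sqrt D / sigma.
set C := M * (pi * sigma)^-1 * expR (- (q ^+ 2 / D * x ^+ 2)).
have a0 : 0 < a by rewrite divr_gt0.
have C0 : 0 <= C.
  by rewrite /C !mulr_ge0 ?expR_ge0 // invr_ge0 mulr_ge0 ?pi_ge0 ?ltW.
apply: (@le_trans _ _ (\int[mu]_y (C * expR (- (a * (y - x / D)) ^+ 2))%:E)%E).
  apply: ge0_le_integral => //.
  - by move=> y _; rewrite lee_fin mulr_ge0 ?psi_s_ge0.
  - apply/measurable_EFinP; apply: measurable_funM => //.
    exact: measurable_psi_s_sub.
  - by apply/measurable_EFinP; apply: measurable_funM => //; exact: measurable_gauss.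
  - move=> y _; rewrite lee_fin.
    have -> : C * expR (- (a * (y - x / D)) ^+ 2) =
              M * psi (q * y) * psi_s sigma (x - y).
      by rewrite -mulrA psi_mul_psi_s // /C -!mulrA.
    by rewrite ler_wpM2r ?psi_s_ge0.
under eq_integral do rewrite EFinM.
rewrite ge0_integralZl_EFin //; last by apply/measurable_EFinP; exact: measurable_gauss.
rewrite integral_gauss // -EFinM lee_fin.
suff -> : C * (Num.sqrt pi / a) = M / Num.sqrt D * psi (q / Num.sqrt D * x) by [].
rewrite /psi.
have -> : (q / Num.sqrt D * x) ^+ 2 = q ^+ 2 / D * x ^+ 2.
  by rewrite !exprMn exprVn sqr_sqrtr ?ltW.
rewrite /C /a; move: (Num.sqrt pi) sqrt_pi_sqr sqrt_pi_gt0 => r <- r0; field.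
by rewrite !gt_eqF.
Qed.

Lemma sqr_mul_spread_le1 (q q2 sigma : R) : 0 <= q -> q <= 1 -> 0 < sigma ->
  sigma < 1 - q2 ^+ 2 -> q2 ^+ 2 * (1 + q ^+ 2 * sigma ^+ 2) <= 1.
Proof.
move=> q0 q1 s0 s1.
have sq_le1 (u : R) : 0 <= u -> u <= 1 -> u ^+ 2 <= 1 by move=> u0 u1; rewrite expr2 mulr_ile1.
have q2_le1 : q2 ^+ 2 <= 1 by rewrite -subr_ge0 (le_trans (ltW s0)) ?ltW.
have ss : sigma ^+ 2 <= sigma.
  by rewrite expr2 ler_piMr ?(ltW s0) // (le_trans (ltW s1)) // gerBl sqr_ge0.
have shrink : q2 ^+ 2 * (q ^+ 2 * sigma ^+ 2) <= sigma.
  rewrite mulrA (le_trans _ ss) // ler_piMl ?sqr_ge0 //.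
  by rewrite mulr_ile1 ?sqr_ge0 // sq_le1.
by rewrite mulrDr mulr1; lra.
Qed.

Lemma one_le_two_div_sqrt3 : 1 <= 2 / Num.sqrt 3 :> R.
Proof.
rewrite ler_pdivlMr ?sqrtr_gt0 // mul1r -[X in _ <= X](@ger0_norm _ 2) //.
by rewrite -sqrtr_sqr ler_sqrt // expr2 -natrM ler_nat.
Qed.

End gaussian_convolution.

Theorem lemma15 (R : realType) (f : R -> R) (M q1 : R) :
  measurable_fun [set: R] f ->
  (forall x, 0 < f x) ->
  0 < M -> 0 < q1 -> q1 <= 1 ->
  (forall x, f x <= M * psi (q1 * x)) ->
  forall q2 sigma : R, 0 < q2 -> q2 < 1 -> 0 < sigma -> sigma < 1 - q2 ^+ 2 ->
  forall x : R,
    (Kconv sigma f x <= (2 / Num.sqrt 3 * M * psi (q1 * q2 * x))%:E)%E.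
Proof.
move=> mf fpos M0 q10 q11 fle q2 sigma q20 q21 s0 s1 x.
set D := 1 + q1 ^+ 2 * sigma ^+ 2.
have D1 : 1 <= D by rewrite lerDl mulr_ge0 // sqr_ge0.
have rD1 : 1 <= Num.sqrt D by rewrite -sqrtr1 ler_sqrt // (le_trans ler01 D1).
have rD0 : 0 < Num.sqrt D by apply: lt_le_trans rD1.
apply: le_trans; first exact: (Kconv_le_psi mf (fun y => ltW (fpos y)) fle s0 x).
rewrite lee_fin -/D; apply: ler_pM; rewrite ?psi_ge0 ?divr_ge0 ?(ltW M0) ?(ltW rD0) //.
- have two_ge := @one_le_two_div_sqrt3 R.
  rewrite ler_pdivrMr // (le_trans (ler_peMl _ two_ge)) ?(ltW M0) //.
  by rewrite ler_peMr // mulr_ge0 ?(ltW M0) // (le_trans ler01 two_ge).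
- have q2D := sqr_mul_spread_le1 (ltW q10) q11 s0 s1.
  apply: psi_le_norm; rewrite !normrM ler_wpM2r // ler_wpM2l //.
  rewrite !gtr0_norm ?invr_gt0 // -div1r ler_pdivlMr //.
  rewrite -(ler_pXn2r (n := 2)) ?nnegrE ?mulr_ge0 ?(ltW q20) ?sqrtr_ge0 //.
  by rewrite expr1n exprMn sqr_sqrtr // (le_trans ler01 D1).
Qed.
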